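(* Fix a bounding strategy: degree bound $\phi$, explicit bound $k$, or node-weighted with cost $c$. Let $T$ be a non-degenerate FQST that is feasible for this strategy and that contains a pair of overlapping edges with common node $v$. Assume that either the strategy is the explicit bound or the node-weighted one, or the strategy is the degree bound and $v$ is not a Steiner point of degree exactly $\phi$. Then $T$ is not an MFQST for that strategy.
   Context: Let $Z=\{z_1,\dots,z_n\}\subset\mathbb{R}^2$ ($n\ge 1$) be a set of sources and $z_{BS}\in\mathbb{R}^2\setminus Z$ a sink; each source has supply $1$. A flow-dependent quadratic Steiner tree (FQST) consists of a finite set $S\subset\mathbb{R}^2$ of Steiner points and a tree $T$ with vertex set $Z\cup S\cup\{z_{BS}\}$ whose edges are directed towards $z_{BS}$. Every node other than the sink has exactly one out-edge, and the sink has none. Each edge $e$ carries a positive flow $f(e)$ such that: - at each source, the flow on its out-edge minus the total flow on its in-edges equals $1$; - at each Steiner point, the out-flow equals the total in-flow; - the sink receives total flow $n$. The cost is $L(T)=\sum_{e\in E(T)} f(e)|e|^2$. $T$ is degenerate if some edge has length $0$. Two edges are overlapping if they share a common endpoint and one of them, as a segment, is contained in the other. Bounding strategies and MFQSTs: - Degree bound: for a fixed integer $\phi\ge3$, every Steiner point has degree $\ge\phi$; an MFQST minimises $L$ among such FQSTs. - Explicit bound: for a fixed $k$, $|S|\le k$; an MFQST minimises $L$ among such FQSTs. - Node-weighted: for a fixed $c>0$, an MFQST minimises $L_c(T)=L(T)+c|S|$ over all FQSTs. *)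

From Stdlib Require Import Reals Lra List.
Open Scope R_scope.

Definition point := (R * R)%type.

Definition dist2 (p q : point) : R :=
  (fst p - fst q) ^ 2 + (snd p - snd q) ^ 2.

Definition on_seg (p a b : point) : Prop :=
  exists t : R, 0 <= t <= 1 /\
    p = (fst a + t * (fst b - fst a), snd a + t * (snd b - snd a)).

(** Vertex indices: [0 .. n-1] are the sources, [n .. n+m-1] the [m] Steiner
    points, and [n+m] is the sink.  Every non-sink vertex [i] has exactly one
    out-edge, namely [(i, par i)], carrying flow [flow i]. *)
Record FQSTdata := mkFQST {
  nsteiner : nat;
  spos : nat -> point;
  par : nat -> nat;
  flow : nat -> R
}.

Section Geometry.
Variables (n : nat) (Z : nat -> point) (zBS : point) (T : FQSTdata).

Definition sinkv : nat := (n + nsteiner T)%nat.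

Definition pos (i : nat) : point :=
  if Nat.ltb i n then Z i
  else if Nat.ltb i sinkv then spos T (i - n)
  else zBS.

Definition inflow (v : nat) : R :=
  fold_right Rplus 0
    (map (fun j => if Nat.eqb (par T j) v then flow T j else 0) (seq 0 sinkv)).

Definition indeg (v : nat) : nat :=
  length (filter (fun j => Nat.eqb (par T j) v) (seq 0 sinkv)).

Definition degree (v : nat) : nat :=
  (indeg v + (if Nat.ltb v sinkv then 1 else 0))%nat.

Definition is_steiner (v : nat) : Prop := (n <= v < sinkv)%nat.

Definition is_FQST : Prop :=
  (forall i, (i < sinkv)%nat -> (par T i <= sinkv)%nat) /\
  (* following out-edges always reaches the sink: T is a tree directed to zBS *)
  (forall i, (i < sinkv)%nat -> exists k, Nat.iter k (par T) i = sinkv) /\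
  (forall i, (i < sinkv)%nat -> 0 < flow T i) /\
  (forall i, (i < n)%nat -> flow T i - inflow i = 1) /\
  (forall i, is_steiner i -> flow T i = inflow i) /\
  inflow sinkv = INR n.

Definition cost : R :=
  fold_right Rplus 0
    (map (fun i => flow T i * dist2 (pos i) (pos (par T i))) (seq 0 sinkv)).

Definition degenerate : Prop :=
  exists i, (i < sinkv)%nat /\ pos i = pos (par T i).

Definition overlapping_at (v : nat) : Prop :=
  exists i j, (i < sinkv)%nat /\ (j < sinkv)%nat /\ i <> j /\
    (v = i \/ v = par T i) /\ (v = j \/ v = par T j) /\
    (forall p, on_seg p (pos i) (pos (par T i)) ->
               on_seg p (pos j) (pos (par T j))).

End Geometry.

Inductive strategy :=
| DegreeBound (phi : nat)
| ExplicitBound (k : nat)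
| NodeWeighted (c : R).

Definition feasible (st : strategy) (n : nat) (T : FQSTdata) : Prop :=
  match st with
  | DegreeBound phi => forall v, is_steiner n T v -> (phi <= degree n T v)%nat
  | ExplicitBound k => (nsteiner T <= k)%nat
  | NodeWeighted _ => True
  end.

Definition objective (st : strategy) (n : nat) (Z : nat -> point) (zBS : point)
  (T : FQSTdata) : R :=
  match st with
  | NodeWeighted c => cost n Z zBS T + c * INR (nsteiner T)
  | _ => cost n Z zBS T
  end.

Definition is_MFQST (st : strategy) (n : nat) (Z : nat -> point) (zBS : point)
  (T : FQSTdata) : Prop :=
  is_FQST n T /\ feasible st n T /\
  forall T', is_FQST n T' -> feasible st n T' ->
    objective st n Z zBS T <= objective st n Z zBS T'.

Definition strategy_ok (st : strategy) : Prop :=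
  match st with
  | DegreeBound phi => (3 <= phi)%nat
  | ExplicitBound _ => True
  | NodeWeighted c => 0 < c
  end.

(** In every case we
    build a feasible FQST with the same Steiner points and strictly smaller
    cost, contradicting minimality for each of the three strategies.
    - Consecutive edges x -> v -> par v (one endpoint of one edge lies on the
      other edge): then |x v|^2 + |v par v|^2 > |x par v|^2.  If v carries more
      flow than x, sending the flow of x directly to par v is cheaper; otherwise
      v is a Steiner point fed only by x, and moving v onto x is cheaper.
    - Sibling edges i -> v, j -> v with i on [j, v]: if i is inside the segment,
      routing j through i is cheaper (strict triangle inequality for squared
      lengths).  If i and j coincide, one of them, s, is a Steiner point; the
      cost of moving s towards v is quadratic in the displacement, and comparing
      the linear coefficients of "move s" and "move s and route the sibling
      through s" contradicts optimality.
    Each modification removes one in-edge of v, which is why the degree bound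
    needs v not to be a Steiner point of degree exactly phi. *)

From Pilot Require Import Defs.
From Stdlib Require Import Reals Lra Lia List Classical.
Open Scope R_scope.

Ltac case_eqb :=
  repeat match goal with |- context [Nat.eqb ?a ?b] => destruct (Nat.eqb_spec a b) end.

Local Notation sumR F l := (fold_right Rplus 0 (map F l)).

Lemma sumR_ext (F G : nat -> R) (l : list nat) :
  (forall k, In k l -> F k = G k) -> sumR F l = sumR G l.
Proof.
  induction l as [|a l IH]; intros H; simpl; [reflexivity|].
  rewrite (H a (or_introl eq_refl)), IH; [reflexivity|].
  intros k Hk; apply H; right; exact Hk.
Qed.

Lemma sumR_plus (F G : nat -> R) (l : list nat) :
  sumR (fun k => F k + G k) l = sumR F l + sumR G l.
Proof. induction l as [|a l IH]; simpl; [ring | rewrite IH; ring]. Qed.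

Lemma sumR_scal (c : R) (F : nat -> R) (l : list nat) :
  sumR (fun k => c * F k) l = c * sumR F l.
Proof. induction l as [|a l IH]; simpl; [ring | rewrite IH; ring]. Qed.

Lemma sumR_delta_out (a : nat) (c : R) (l : list nat) :
  ~ In a l -> sumR (fun k => if k =? a then c else 0) l = 0.
Proof.
  induction l as [|h l IH]; intros Ha; simpl; [reflexivity|].
  destruct (Nat.eqb_spec h a) as [->|_]; [exfalso; apply Ha; left; reflexivity|].
  rewrite IH; [ring | intro; apply Ha; right; assumption].
Qed.

Lemma sumR_delta_in (a : nat) (c : R) (l : list nat) :
  NoDup l -> In a l -> sumR (fun k => if k =? a then c else 0) l = c.
Proof.
  induction l as [|h l IH]; intros Hnd Ha; simpl; [destruct Ha|].
  inversion Hnd as [|? ? Hh Hl]; subst.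
  destruct (Nat.eqb_spec h a) as [->|Hne].
  - rewrite sumR_delta_out by assumption; ring.
  - destruct Ha as [->|Ha]; [contradiction|]. rewrite IH by assumption; ring.
Qed.

Lemma sumR_two_deltas (F G : nat -> R) (l : list nat) (a b : nat) (ca cb : R) :
  (forall k, In k l ->
     F k = G k + (if k =? a then ca else 0) + (if k =? b then cb else 0)) ->
  NoDup l -> In a l -> In b l ->
  sumR F l = sumR G l + ca + cb.
Proof.
  intros H Hnd Ha Hb.
  rewrite (sumR_ext F _ l H), !sumR_plus, (sumR_delta_in a), (sumR_delta_in b) by assumption.
  reflexivity.
Qed.

Lemma sumR_nonneg (F : nat -> R) (l : list nat) :
  (forall k, In k l -> 0 <= F k) -> 0 <= sumR F l.
Proof.
  induction l as [|a l IH]; intros H; simpl; [lra|].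
  assert (0 <= F a) by (apply H; left; reflexivity).
  assert (0 <= sumR F l) by (apply IH; intros k Hk; apply H; right; exact Hk).
  lra.
Qed.

Lemma sumR_ge_term (F : nat -> R) (l : list nat) (a : nat) :
  (forall k, In k l -> 0 <= F k) -> In a l -> F a <= sumR F l.
Proof.
  induction l as [|h l IH]; intros H Ha; simpl; [destruct Ha|].
  assert (Hl : forall k, In k l -> 0 <= F k) by (intros k Hk; apply H; right; exact Hk).
  destruct Ha as [->|Ha].
  - pose proof (sumR_nonneg F l Hl); lra.
  - assert (0 <= F h) by (apply H; left; reflexivity).
    pose proof (IH Hl Ha); lra.
Qed.

Lemma sumR_ge_two_terms (F : nat -> R) (l : list nat) (a b : nat) :
  (forall k, In k l -> 0 <= F k) -> NoDup l -> a <> b -> In a l -> In b l ->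
  F a + F b <= sumR F l.
Proof.
  induction l as [|h l IH]; intros H Hnd Hab Ha Hb; simpl; [destruct Ha|].
  inversion Hnd as [|? ? _ Hl']; subst.
  assert (Hl : forall k, In k l -> 0 <= F k) by (intros k Hk; apply H; right; exact Hk).
  assert (0 <= F h) by (apply H; left; reflexivity).
  destruct Ha as [->|Ha], Hb as [->|Hb].
  - contradiction.
  - pose proof (sumR_ge_term F l b Hl Hb); lra.
  - pose proof (sumR_ge_term F l a Hl Ha); lra.
  - pose proof (IH Hl Hl' Hab Ha Hb); lra.
Qed.

Definition lerp (a b : point) (t : R) : point :=
  (fst a + t * (fst b - fst a), snd a + t * (snd b - snd a)).

Lemma dist2_nonneg (a b : point) : 0 <= dist2 a b.
Proof.
  unfold dist2; pose proof (pow2_ge_0 (fst a - fst b)); pose proof (pow2_ge_0 (snd a - snd b)); lra.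
Qed.

Lemma sq_pos (x : R) : x <> 0 -> 0 < x ^ 2.
Proof. intros Hx; replace (x ^ 2) with (x²) by (unfold Rsqr; ring); apply Rlt_0_sqr, Hx. Qed.

Lemma dist2_pos (a b : point) : a <> b -> 0 < dist2 a b.
Proof.
  destruct a as [a1 a2], b as [b1 b2]; unfold dist2; simpl; intros Hab.
  pose proof (pow2_ge_0 (a1 - b1)); pose proof (pow2_ge_0 (a2 - b2)).
  destruct (Req_dec a1 b1) as [->|H1].
  - assert (a2 - b2 <> 0) by (intro; apply Hab; f_equal; lra).
    pose proof (sq_pos (a2 - b2)); lra.
  - assert (a1 - b1 <> 0) by lra. pose proof (sq_pos (a1 - b1)); lra.
Qed.

Lemma dist2_self (a : point) : dist2 a a = 0.
Proof. unfold dist2; ring. Qed.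

Lemma dist2_lerp_start (a b : point) (t : R) : dist2 a (lerp a b t) = t ^ 2 * dist2 a b.
Proof. unfold dist2, lerp; simpl; ring. Qed.

Lemma dist2_lerp_end (a b : point) (t : R) : dist2 (lerp a b t) b = (1 - t) ^ 2 * dist2 a b.
Proof. unfold dist2, lerp; simpl; ring. Qed.

Lemma on_seg_start (a b : point) : on_seg a a b.
Proof. exists 0; split; [lra|]. destruct a; simpl; f_equal; ring. Qed.

Lemma on_seg_end (a b : point) : on_seg b a b.
Proof. exists 1; split; [lra|]. destruct a, b; simpl; f_equal; ring. Qed.

Lemma on_seg_dist_start (p a b : point) : on_seg p a b -> dist2 a p <= dist2 a b.
Proof.
  intros (t & Ht & ->). change (dist2 a (lerp a b t) <= dist2 a b).
  rewrite dist2_lerp_start.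
  assert (0 <= (1 - t ^ 2) * dist2 a b) by (apply Rmult_le_pos; [simpl; nra | apply dist2_nonneg]).
  lra.
Qed.

Lemma on_seg_dist_end (p a b : point) : on_seg p a b -> dist2 p b <= dist2 a b.
Proof.
  intros (t & Ht & ->). change (dist2 (lerp a b t) b <= dist2 a b).
  rewrite dist2_lerp_end.
  assert (0 <= (1 - (1 - t) ^ 2) * dist2 a b) by (apply Rmult_le_pos; [simpl; nra | apply dist2_nonneg]).
  lra.
Qed.

(** Strict triangle inequality for squared lengths at an interior point of a
    segment: |ap|^2 + |pb|^2 = (1 - 2 t (1 - t)) |ab|^2 < |ab|^2. *)
Lemma on_seg_interior (p a b : point) :
  on_seg p a b -> p <> a -> p <> b -> dist2 a p + dist2 p b < dist2 a b.
Proof.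
  intros (t & Ht & ->) Ha Hb. change (lerp a b t <> a) in Ha. change (lerp a b t <> b) in Hb.
  change (dist2 a (lerp a b t) + dist2 (lerp a b t) b < dist2 a b).
  assert (Hab : a <> b) by (intros <-; apply Ha; destruct a; unfold lerp; simpl; f_equal; ring).
  assert (t <> 0) by (intros ->; apply Ha; destruct a; unfold lerp; simpl; f_equal; ring).
  assert (t <> 1) by (intros ->; apply Hb; destruct a, b; unfold lerp; simpl; f_equal; ring).
  rewrite dist2_lerp_start, dist2_lerp_end.
  pose proof (dist2_pos a b Hab).
  assert (0 < t * (1 - t)) by (apply Rmult_lt_0_compat; lra).
  nra.
Qed.

(** A quadratic [t A + t^2 B] with [B >= 0] that is never negative has no
    linear term: this is the first-order optimality condition. *)
Lemma quad_zero (A B : R) : (forall t, 0 <= t * A + t ^ 2 * B) -> 0 <= B -> A = 0.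
Proof.
  intros H HB. destruct (Req_dec A 0) as [|HA]; [assumption|]. exfalso.
  specialize (H (- A / (2 * (B + 1)))).
  pose proof (sq_pos A HA).
  replace (- A / (2 * (B + 1)) * A + (- A / (2 * (B + 1))) ^ 2 * B)
    with (- (A ^ 2 * (B + 2)) / (4 * (B + 1) ^ 2)) in H by (field; lra).
  assert (0 < A ^ 2 * (B + 2) / (4 * (B + 1) ^ 2)).
  { apply Rdiv_lt_0_compat; [apply Rmult_lt_0_compat | apply Rmult_lt_0_compat]; nra. }
  unfold Rdiv in *; lra.
Qed.

Definition reaches (p : nat -> nat) (s k : nat) : Prop := exists m, Nat.iter m p k = s.

Lemma reaches_step (p : nat -> nat) (s k : nat) : reaches p s (p k) -> reaches p s k.
Proof. intros [m Hm]; exists (S m); rewrite Nat.iter_succ_r; exact Hm. Qed.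

Lemma reaches_next (p : nat -> nat) (s k : nat) : reaches p s k -> k <> s -> reaches p s (p k).
Proof.
  intros [[|m] Hm] Hks; [contradiction|].
  exists m; rewrite <- Nat.iter_succ_r; exact Hm.
Qed.

Lemma reaches_redirect (p p' : nat -> nat) (s x : nat) :
  (forall k, k <> x -> p' k = p k) ->
  (reaches p' s (p x) -> reaches p' s (p' x)) ->
  forall k, reaches p s k -> reaches p' s k.
Proof.
  intros Hagree Hx k [m Hm]; revert k Hm.
  induction m as [|m IH]; intros k Hk; [exists 0%nat; exact Hk|].
  rewrite Nat.iter_succ_r in Hk. apply reaches_step.
  destruct (Nat.eq_dec k x) as [->|Hkx].
  - apply Hx, IH, Hk.
  - rewrite Hagree by exact Hkx. apply IH, Hk.
Qed.

Lemma reaches_shortcut (p : nat -> nat) (s x : nat) : p x <> s ->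
  forall k, reaches p s k -> reaches (fun k => if k =? x then p (p x) else p k) s k.
Proof.
  intros Hpx. apply (reaches_redirect p _ s x).
  - intros k Hk; destruct (Nat.eqb_spec k x); [contradiction | reflexivity].
  - intros Hr. pose proof (reaches_next _ _ _ Hr Hpx) as Hr'.
    cbv beta in Hr'. rewrite Nat.eqb_refl. destruct (p x =? x); exact Hr'.
Qed.

Lemma reaches_sibling (p : nat -> nat) (s x z : nat) : z <> x -> p z = p x ->
  forall k, reaches p s k -> reaches (fun k => if k =? x then z else p k) s k.
Proof.
  intros Hzx Hpz. apply (reaches_redirect p _ s x).
  - intros k Hk; destruct (Nat.eqb_spec k x); [contradiction | reflexivity].
  - intros Hr. rewrite Nat.eqb_refl. apply reaches_step.
    destruct (Nat.eqb_spec z x); [contradiction|]. rewrite Hpz; exact Hr.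
Qed.

Lemma count_filter_mono (p q : nat -> bool) (l : list nat) :
  (forall j, In j l -> p j = true -> q j = true) ->
  (length (filter p l) <= length (filter q l))%nat.
Proof.
  induction l as [|a l IH]; intros H; simpl; [lia|].
  assert (IH' : (length (filter p l) <= length (filter q l))%nat)
    by (apply IH; intros j Hj; apply H; right; exact Hj).
  destruct (p a) eqn:E.
  - rewrite (H a (or_introl eq_refl) E); simpl; lia.
  - destruct (q a); simpl; lia.
Qed.

Lemma count_filter_drop_one (p q : nat -> bool) (l : list nat) (x : nat) :
  NoDup l -> In x l -> p x = true -> q x = false ->
  (forall j, In j l -> j <> x -> p j = q j) ->
  length (filter p l) = S (length (filter q l)).
Proof.
  induction l as [|a l IH]; intros Hnd Hx Hp Hq H; [destruct Hx|].
  inversion Hnd as [|? ? Ha Hl]; subst; simpl.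
  destruct Hx as [->|Hx].
  - rewrite Hp, Hq; simpl. f_equal. f_equal. apply filter_ext_in.
    intros j Hj; apply H; [right; exact Hj | intros ->; contradiction].
  - assert (Hax : a <> x) by (intros ->; contradiction).
    rewrite (H a (or_introl eq_refl) Hax).
    destruct (q a); simpl; [f_equal|]; apply IH; auto; intros j Hj; apply H; right; exact Hj.
Qed.

Section LocalModifications.
Variables (st : strategy) (n : nat) (Z : nat -> point) (zBS : point).

Local Notation loc T k := (Defs.pos n Z zBS T k).
Local Notation cost T := (cost n Z zBS T).

(** No out-edge is a loop, since following out-edges reaches the sink. *)
Lemma par_ne_self (T : FQSTdata) (i : nat) :
  is_FQST n T -> (i < sinkv n T)%nat -> par T i <> i.
Proof.
  intros (_ & Hreach & _) Hi Hfix. destruct (Hreach i Hi) as [m Hm].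
  assert (Hconst : forall k, Nat.iter k (par T) i = i)
    by (intros k; induction k as [|k IHk]; simpl; [reflexivity | rewrite IHk; exact Hfix]).
  rewrite Hconst in Hm; lia.
Qed.

Lemma inflow_terms_nonneg (T : FQSTdata) (y : nat) :
  is_FQST n T ->
  forall k, In k (seq 0 (sinkv n T)) -> 0 <= (if par T k =? y then flow T k else 0).
Proof.
  intros (_ & _ & Hflow & _) k Hk. apply in_seq in Hk.
  destruct (par T k =? y); [apply Rlt_le, Hflow; lia | lra].
Qed.

Lemma flow_le_inflow (T : FQSTdata) (x : nat) :
  is_FQST n T -> (x < sinkv n T)%nat -> flow T x <= inflow n T (par T x).
Proof.
  intros HF Hx. unfold inflow.
  pose proof (sumR_ge_term _ _ x (inflow_terms_nonneg T (par T x) HF)) as Hge.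
  cbv beta in Hge. rewrite Nat.eqb_refl in Hge. apply Hge, in_seq; lia.
Qed.

Lemma unique_inedge (T : FQSTdata) (x k : nat) :
  is_FQST n T -> (x < sinkv n T)%nat -> inflow n T (par T x) = flow T x ->
  (k < sinkv n T)%nat -> k <> x -> par T k <> par T x.
Proof.
  intros HF Hx Hin Hk Hkx Hpar. unfold inflow in Hin.
  pose proof (sumR_ge_two_terms _ _ x k (inflow_terms_nonneg T (par T x) HF) (seq_NoDup _ _))
    as Hge.
  cbv beta in Hge. rewrite Hpar, Nat.eqb_refl in Hge.
  specialize (Hge (not_eq_sym Hkx) ltac:(apply in_seq; lia) ltac:(apply in_seq; lia)).
  destruct HF as (_ & _ & Hflow & _). pose proof (Hflow k Hk). lra.
Qed.

Definition redirect (T : FQSTdata) (x z w : nat) (d : R) : FQSTdata :=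
  mkFQST (nsteiner T) (spos T) (fun k => if k =? x then z else par T k)
    (fun k => if k =? w then flow T k + d else flow T k).

Lemma inflow_redirect (T : FQSTdata) (x z w : nat) (d : R) (k : nat) :
  x <> w -> (x < sinkv n T)%nat -> (w < sinkv n T)%nat ->
  inflow n (redirect T x z w d) k = inflow n T k
    + ((if z =? k then flow T x else 0) - (if par T x =? k then flow T x else 0))
    + (if par T w =? k then d else 0).
Proof.
  intros Hxw Hx Hw. unfold inflow; change (sinkv n (redirect T x z w d)) with (sinkv n T).
  apply (sumR_two_deltas _ _ _ x w); [| apply seq_NoDup | apply in_seq; lia | apply in_seq; lia].
  intros j _; simpl; case_eqb; subst; try congruence; ring.
Qed.

Lemma cost_redirect (T : FQSTdata) (x z w : nat) (d : R) :
  x <> w -> (x < sinkv n T)%nat -> (w < sinkv n T)%nat ->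
  cost (redirect T x z w d) = cost T
    + flow T x * (dist2 (loc T x) (loc T z) - dist2 (loc T x) (loc T (par T x)))
    + d * dist2 (loc T w) (loc T (par T w)).
Proof.
  intros Hxw Hx Hw. unfold Defs.cost; change (sinkv n (redirect T x z w d)) with (sinkv n T).
  change (Defs.pos n Z zBS (redirect T x z w d)) with (Defs.pos n Z zBS T).
  apply (sumR_two_deltas _ _ _ x w); [| apply seq_NoDup | apply in_seq; lia | apply in_seq; lia].
  intros j _; simpl; case_eqb; subst; try congruence; ring.
Qed.

Lemma redirect_FQST (T : FQSTdata) (x z w : nat) (d : R) :
  is_FQST n T -> (x < sinkv n T)%nat -> (w < sinkv n T)%nat -> x <> w ->
  (z <= sinkv n T)%nat -> 0 < flow T w + d ->
  (forall k, (if z =? k then flow T x else 0) - (if par T x =? k then flow T x else 0)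
             + (if par T w =? k then d else 0) = (if k =? w then d else 0)) ->
  (forall k, (k < sinkv n T)%nat -> reaches (par (redirect T x z w d)) (sinkv n T) k) ->
  is_FQST n (redirect T x z w d).
Proof.
  intros (Hpar & _ & Hflow & Hsrc & Hsteiner & Hsink) Hx Hw Hxw Hz Hpos Hbal Hreach.
  assert (Hfl : forall i, flow (redirect T x z w d) i = flow T i + (if i =? w then d else 0))
    by (intros i; simpl; destruct (i =? w); ring).
  unfold is_FQST; change (sinkv n (redirect T x z w d)) with (sinkv n T).
  repeat split.
  - intros i Hi; simpl; destruct (i =? x); [exact Hz | apply Hpar, Hi].
  - exact Hreach.
  - intros i Hi; rewrite Hfl. destruct (Nat.eqb_spec i w) as [->|_]; [exact Hpos|].
    pose proof (Hflow i Hi); lra.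
  - intros i Hi; rewrite Hfl, inflow_redirect by assumption.
    pose proof (Hsrc i Hi); pose proof (Hbal i); lra.
  - intros i Hi; rewrite Hfl, inflow_redirect by assumption.
    pose proof (Hsteiner i Hi); pose proof (Hbal i); lra.
  - rewrite inflow_redirect by assumption. pose proof (Hbal (sinkv n T)).
    destruct (Nat.eqb_spec (sinkv n T) w); [lia | lra].
Qed.

Lemma shortcut_FQST (T : FQSTdata) (x v : nat) :
  is_FQST n T -> (x < sinkv n T)%nat -> par T x = v -> (v < sinkv n T)%nat ->
  flow T x < flow T v ->
  is_FQST n (redirect T x (par T v) v (- flow T x)).
Proof.
  intros HF Hx <- Hv Hlt.
  pose proof HF as (Hpar & Hreach & _).
  assert (Hxv : x <> par T x) by (intros E; exact (par_ne_self T x HF Hx (eq_sym E))).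
  apply redirect_FQST; try assumption.
  - apply Hpar, Hv.
  - lra.
  - intros k; case_eqb; try congruence; lra.
  - intros k Hk; apply reaches_shortcut; [lia | apply Hreach, Hk].
Qed.

Lemma sibling_FQST (T : FQSTdata) (x z : nat) :
  is_FQST n T -> (x < sinkv n T)%nat -> (z < sinkv n T)%nat -> x <> z -> par T z = par T x ->
  is_FQST n (redirect T x z z (flow T x)).
Proof.
  intros HF Hx Hz Hxz Hsib.
  pose proof HF as (_ & Hreach & Hflow & _).
  apply redirect_FQST; try assumption.
  - lia.
  - pose proof (Hflow x Hx); pose proof (Hflow z Hz); lra.
  - intros k; rewrite Hsib; case_eqb; try congruence; lra.
  - intros k Hk; apply reaches_sibling; [congruence | exact Hsib | apply Hreach, Hk].
Qed.

Definition degree_slack (T : FQSTdata) (v : nat) : Prop :=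
  forall phi, st = DegreeBound phi -> ~ (is_steiner n T v /\ degree n T v = phi).

(** Redirecting an out-edge away from [v] keeps feasibility: only [v] loses
    an in-edge, which [degree_slack] allows. *)
Lemma redirect_feasible (T : FQSTdata) (x z w : nat) (d : R) :
  feasible st n T -> (x < sinkv n T)%nat -> z <> par T x -> degree_slack T (par T x) ->
  feasible st n (redirect T x z w d).
Proof.
  intros Hf Hx Hz Hslack; unfold degree_slack in Hslack.
  destruct st as [phi|k|c]; simpl in *; [|exact Hf | exact I].
  intros u Hu. specialize (Hf u Hu). specialize (Hslack phi eq_refl).
  unfold degree, indeg in *; change (sinkv n (redirect T x z w d)) with (sinkv n T) in *.
  cbn [par redirect].
  destruct (Nat.eq_dec u (par T x)) as [->|Hu'].
  - assert (Hdrop : length (filter (fun j => par T j =? par T x) (seq 0 (sinkv n T)))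
       = S (length (filter (fun j => (if j =? x then z else par T j) =? par T x)
                           (seq 0 (sinkv n T))))).
    { apply (count_filter_drop_one _ _ _ x); [apply seq_NoDup | apply in_seq; lia | | |].
      - apply Nat.eqb_refl.
      - rewrite Nat.eqb_refl; apply Nat.eqb_neq, Hz.
      - intros j _ Hj; apply Nat.eqb_neq in Hj; rewrite Hj; reflexivity. }
    assert (degree n T (par T x) <> phi) by (intro; apply Hslack; split; assumption).
    unfold degree, indeg in *. lia.
  - assert (length (filter (fun j => par T j =? u) (seq 0 (sinkv n T))) <=
            length (filter (fun j => (if j =? x then z else par T j) =? u) (seq 0 (sinkv n T))))%nat.
    { apply count_filter_mono. intros j _ Hj.
      destruct (Nat.eqb_spec j x) as [->|_]; [|exact Hj].
      apply Nat.eqb_eq in Hj; congruence. }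
    lia.
Qed.

Definition move_steiner (T : FQSTdata) (s : nat) (X : point) : FQSTdata :=
  mkFQST (nsteiner T) (fun q => if q =? s - n then X else spos T q) (par T) (flow T).

Lemma loc_move_steiner (T : FQSTdata) (s : nat) (X : point) (k : nat) :
  is_steiner n T s -> loc (move_steiner T s X) k = if k =? s then X else loc T k.
Proof.
  intros [Hs1 Hs2]. unfold Defs.pos; change (sinkv n (move_steiner T s X)) with (sinkv n T).
  cbn [spos move_steiner].
  destruct (Nat.ltb_spec k n), (Nat.ltb_spec k (sinkv n T)), (Nat.eqb_spec k s),
    (Nat.eqb_spec (k - n) (s - n)); try lia; reflexivity.
Qed.

Lemma cost_move_single_inedge (T : FQSTdata) (x y : nat) (X : point) :
  is_FQST n T -> is_steiner n T y -> (x < sinkv n T)%nat -> par T x = y ->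
  (forall k, (k < sinkv n T)%nat -> k <> x -> par T k <> y) ->
  cost (move_steiner T y X) = cost T
    + flow T x * (dist2 (loc T x) X - dist2 (loc T x) (loc T y))
    + flow T y * (dist2 X (loc T (par T y)) - dist2 (loc T y) (loc T (par T y))).
Proof.
  intros HF Hy Hx Hxy Honly. pose proof Hy as [Hy1 Hy2].
  assert (Hpy : par T y <> y) by (apply par_ne_self; assumption).
  assert (Hxy' : x <> y) by (intros ->; exact (Hpy Hxy)).
  unfold Defs.cost; change (sinkv n (move_steiner T y X)) with (sinkv n T).
  apply (sumR_two_deltas _ _ _ x y); [| apply seq_NoDup | apply in_seq; lia | apply in_seq; lia].
  intros k Hk; apply in_seq in Hk. rewrite !loc_move_steiner by assumption.
  cbn [par flow move_steiner].
  destruct (Nat.eqb_spec k x) as [->|Hkx]; [rewrite Hxy|]; case_eqb; try subst k; try congruence; try ring.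
  exfalso; apply (Honly k); [lia | assumption..].
Qed.

Lemma cost_move_quadratic (T : FQSTdata) (s : nat) (W : point) :
  is_FQST n T -> is_steiner n T s ->
  exists a b, 0 <= b /\ forall t,
    cost (move_steiner T s (lerp (loc T s) W t)) = cost T + t * a + t ^ 2 * b.
Proof.
  intros HF Hs. pose proof HF as (_ & _ & Hflow & _).
  set (ux := fst W - fst (loc T s)); set (uy := snd W - snd (loc T s)).
  set (e := fun k => (if k =? s then 1 else 0) - (if par T k =? s then 1 else 0)).
  exists (sumR (fun k => flow T k * (2 * e k *
            ((fst (loc T k) - fst (loc T (par T k))) * ux
             + (snd (loc T k) - snd (loc T (par T k))) * uy))) (seq 0 (sinkv n T))).
  exists (sumR (fun k => flow T k * (e k ^ 2 * (ux ^ 2 + uy ^ 2))) (seq 0 (sinkv n T))).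
  split.
  - apply sumR_nonneg; intros k Hk; apply in_seq in Hk.
    pose proof (Hflow k ltac:(lia)); pose proof (pow2_ge_0 (e k));
      pose proof (pow2_ge_0 ux); pose proof (pow2_ge_0 uy).
    apply Rmult_le_pos; [lra | apply Rmult_le_pos; lra].
  - intros t. unfold Defs.cost; change (sinkv n (move_steiner T s ?X)) with (sinkv n T).
    rewrite <- !sumR_scal, <- !sumR_plus. apply sumR_ext; intros k _.
    rewrite !loc_move_steiner by assumption. cbn [par flow move_steiner].
    unfold e, ux, uy, lerp, dist2.
    destruct (Nat.eqb_spec k s) as [Hk|_], (Nat.eqb_spec (par T k) s) as [Hpk|_];
      try rewrite Hpk; try rewrite Hk; simpl; ring.
Qed.

Definition optimal (T : FQSTdata) : Prop :=
  forall T', is_FQST n T' -> feasible st n T' ->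
    objective st n Z zBS T <= objective st n Z zBS T'.

Lemma optimal_cost_le (T T' : FQSTdata) :
  optimal T -> is_FQST n T' -> feasible st n T' -> nsteiner T' = nsteiner T ->
  cost T <= cost T'.
Proof.
  intros Hopt HF Hf Hs. specialize (Hopt T' HF Hf).
  destruct st; simpl in Hopt; [exact Hopt | exact Hopt | rewrite Hs in Hopt; lra].
Qed.

Section Optimal.
Variable T : FQSTdata.
Hypotheses (HF : is_FQST n T) (Hfeas : feasible st n T) (Hopt : optimal T).

(** Consecutive edges [x -> v -> par v] of an optimal tree meet at a non-acute
    angle: otherwise shortcutting [x] to [par v] (or, if [v] is a Steiner point
    fed only by [x], moving [v] onto [x]) is cheaper. *)
Lemma consecutive_edges_bound (x v : nat) :
  (x < sinkv n T)%nat -> par T x = v -> (v < sinkv n T)%nat -> degree_slack T v ->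
  dist2 (loc T x) (loc T v) + dist2 (loc T v) (loc T (par T v))
    <= dist2 (loc T x) (loc T (par T v)).
Proof.
  intros Hx Hxv Hv Hslack. apply Rnot_lt_le; intros Hgain.
  pose proof HF as (_ & _ & Hflow & Hsrc & Hsteiner & _).
  pose proof (Hflow x Hx) as Hfx.
  assert (Hin : flow T x <= inflow n T v) by (rewrite <- Hxv; apply flow_le_inflow; assumption).
  assert (Hcases : flow T x < flow T v \/ (is_steiner n T v /\ inflow n T v = flow T x)).
  { destruct (Nat.ltb_spec v n) as [Hvn|Hvn].
    - left; pose proof (Hsrc v Hvn); lra.
    - assert (Hs : is_steiner n T v) by (split; lia). pose proof (Hsteiner v Hs).
      destruct (Rle_lt_or_eq_dec _ _ Hin); [left; lra | right; split; auto]. }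
  assert (Hxv' : x <> v) by (intros ->; exact (par_ne_self T v HF Hv Hxv)).
  destruct Hcases as [Hlt | [Hs Hsingle]].
  - assert (Hle : cost T <= cost (redirect T x (par T v) v (- flow T x))).
    { apply optimal_cost_le; [exact Hopt | apply shortcut_FQST; assumption | | reflexivity].
      apply redirect_feasible; [assumption | assumption | | rewrite Hxv; assumption].
      rewrite Hxv; apply par_ne_self; assumption. }
    rewrite cost_redirect, Hxv in Hle by assumption. nra.
  - assert (Hle := optimal_cost_le T (move_steiner T v (loc T x)) Hopt HF Hfeas eq_refl).
    rewrite (cost_move_single_inedge T x v) in Hle by
      (try assumption; intros k Hk Hkx; rewrite <- Hxv; apply unique_inedge; congruence).
    rewrite dist2_self, (Hsteiner v Hs), Hsingle in Hle. nra.
Qed.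

Lemma sibling_edges_bound (x z : nat) :
  (x < sinkv n T)%nat -> (z < sinkv n T)%nat -> x <> z -> par T z = par T x ->
  degree_slack T (par T x) ->
  dist2 (loc T x) (loc T (par T x))
    <= dist2 (loc T x) (loc T z) + dist2 (loc T z) (loc T (par T x)).
Proof.
  intros Hx Hz Hxz Hsib Hslack.
  pose proof HF as (_ & _ & Hflow & _). pose proof (Hflow x Hx) as Hfx.
  assert (Hle : cost T <= cost (redirect T x z z (flow T x))).
  { apply optimal_cost_le; [exact Hopt | apply sibling_FQST; assumption | | reflexivity].
    apply redirect_feasible; try assumption.
    intros E; rewrite <- E in Hsib; exact (par_ne_self T z HF Hz Hsib). }
  rewrite cost_redirect, Hsib in Hle by assumption.
  apply (Rmult_le_reg_l (flow T x)); [exact Hfx | nra].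
Qed.

(** Moving [s] towards [v]
    by [t] changes the cost by [t a + t^2 b]; moving it and routing [o] through
    [s] changes it by [t (a - 2 f D) + t^2 (b + 2 f D)] with [f D > 0] when
    [s] is away from [v].  Optimality makes both linear coefficients vanish. *)
Lemma coincident_siblings (o s : nat) :
  (o < sinkv n T)%nat -> is_steiner n T s -> o <> s -> par T o = par T s ->
  loc T o = loc T s -> degree_slack T (par T s) ->
  loc T s = loc T (par T s).
Proof.
  intros Ho Hs Hos Hsib Hpos Hslack. pose proof Hs as [_ Hs2].
  apply NNPP; intros Hne.
  set (v := par T s) in *; set (P := loc T s) in *; set (V := loc T v) in *.
  assert (Hvs : v <> s) by exact (par_ne_self T s HF Hs2).
  pose proof (dist2_pos P V Hne) as HD.
  pose proof HF as (_ & _ & Hflow & _).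
  assert (HfD : 0 < flow T o * dist2 P V) by (apply Rmult_lt_0_compat; [apply Hflow, Ho | exact HD]).
  destruct (cost_move_quadratic T s V HF Hs) as (a & b & Hb & Hquad).
  assert (Ha : a = 0).
  { apply (quad_zero a b); [intros t | exact Hb].
    pose proof (optimal_cost_le T (move_steiner T s (lerp P V t)) Hopt HF Hfeas eq_refl) as Hle.
    rewrite Hquad in Hle; lra. }
  assert (Hcombined : a - 2 * flow T o * dist2 P V = 0).
  { apply (quad_zero _ (b + 2 * flow T o * dist2 P V)); [intros t | lra].
    set (Tt := move_steiner T s (lerp P V t)).
    assert (Hle : cost T <= cost (redirect Tt o s s (flow T o))).
    { apply optimal_cost_le; [exact Hopt | | | reflexivity].
      - apply (sibling_FQST Tt); [exact HF | exact Ho | exact Hs2 | exact Hos | symmetry; exact Hsib].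
      - apply (redirect_feasible Tt); [exact Hfeas | exact Ho | |].
        + change (s <> par T o); rewrite Hsib; exact (not_eq_sym Hvs).
        + change (degree_slack T (par T o)); rewrite Hsib; exact Hslack. }
    unfold Tt in Hle.
    rewrite cost_redirect, Hquad, !loc_move_steiner in Hle by (assumption || lia).
    cbn [par flow move_steiner] in Hle. rewrite Hsib in Hle. change (par T s) with v in Hle.
    rewrite Nat.eqb_refl in Hle.
    destruct (Nat.eqb_spec o s), (Nat.eqb_spec v s); try contradiction.
    rewrite Hpos, dist2_lerp_start, dist2_lerp_end in Hle. fold V in Hle. nra. }
  lra.
Qed.

Lemma overlapping_siblings (i j : nat) :
  (forall a b, (a < n)%nat -> (b < n)%nat -> Z a = Z b -> a = b) ->
  (forall k, (k < sinkv n T)%nat -> loc T k <> loc T (par T k)) ->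
  (i < sinkv n T)%nat -> (j < sinkv n T)%nat -> i <> j -> par T i = par T j ->
  degree_slack T (par T i) -> on_seg (loc T i) (loc T j) (loc T (par T i)) -> False.
Proof.
  intros Zinj Hne Hi Hj Hij Hsib Hslack Hon.
  destruct (classic (loc T i = loc T j)) as [Hsame|Hdiff].
  - (* coinciding tails: one of them is a Steiner point, which would sit on v *)
    destruct (Nat.lt_ge_cases i n) as [Hin|Hin]; [destruct (Nat.lt_ge_cases j n) as [Hjn|Hjn]|].
    + apply Hij, Zinj; try assumption.
      unfold Defs.pos in Hsame.
      destruct (Nat.ltb_spec i n), (Nat.ltb_spec j n); [exact Hsame | lia..].
    + apply (Hne j Hj), (coincident_siblings i j);
        [exact Hi | split; lia | exact Hij | exact Hsib | exact Hsame | rewrite <- Hsib; exact Hslack].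
    + apply (Hne i Hi), (coincident_siblings j i);
        [exact Hj | split; lia | exact (not_eq_sym Hij) | exact (eq_sym Hsib)
        | exact (eq_sym Hsame) | exact Hslack].
  - (* distinct tails: rerouting j through i is strictly cheaper *)
    pose proof (on_seg_interior _ _ _ Hon Hdiff (Hne i Hi)) as Hstrict.
    pose proof (sibling_edges_bound j i Hj Hi (not_eq_sym Hij) Hsib) as Hbound.
    rewrite <- Hsib in Hbound. specialize (Hbound Hslack). lra.
Qed.

End Optimal.
End LocalModifications.

Theorem mainTheorem5 (st : strategy) (n : nat) (Z : nat -> point) (zBS : point)
  (T : FQSTdata) (v : nat) :
  strategy_ok st ->
  (1 <= n)%nat ->
  (forall i j, (i < n)%nat -> (j < n)%nat -> Z i = Z j -> i = j) ->
  (forall i, (i < n)%nat -> Z i <> zBS) ->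
  is_FQST n T ->
  ~ degenerate n Z zBS T ->
  feasible st n T ->
  overlapping_at n Z zBS T v ->
  (forall phi, st = DegreeBound phi ->
     ~ (is_steiner n T v /\ degree n T v = phi)) ->
  ~ is_MFQST st n Z zBS T.
Proof.
  intros _ _ Zinj _ HF Hnd Hfeas Hov Hslack (_ & _ & Hopt).
  assert (Hne : forall k, (k < sinkv n T)%nat ->
                 Defs.pos n Z zBS T k <> Defs.pos n Z zBS T (par T k))
    by (intros k Hk E; apply Hnd; exists k; split; assumption).
  assert (Hedge : forall k, (k < sinkv n T)%nat ->
                   0 < dist2 (Defs.pos n Z zBS T k) (Defs.pos n Z zBS T (par T k)))
    by (intros k Hk; apply dist2_pos, Hne, Hk).
  destruct Hov as (i & j & Hi & Hj & Hij & [<-|Ei] & [Ej|Ej] & Hseg).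
  -
    contradiction.
  - (* e_j enters v and e_i leaves it: par v lies on the segment [j, v] *)
    pose proof (on_seg_dist_start _ _ _ (Hseg _ (on_seg_end _ _))) as Hshort.
    rewrite <- Ej in Hshort.
    pose proof (consecutive_edges_bound st n Z zBS T HF Hfeas Hopt j v Hj (eq_sym Ej) Hi Hslack).
    pose proof (Hedge v Hi). lra.
  - (* e_i enters v and e_j leaves it: i lies on the segment [v, par v] *)
    subst j. pose proof (on_seg_dist_end _ _ _ (Hseg _ (on_seg_start _ _))) as Hshort.
    pose proof (consecutive_edges_bound st n Z zBS T HF Hfeas Hopt i v Hi (eq_sym Ei) Hj Hslack).
    pose proof (Hedge i Hi) as Hiv. rewrite <- Ei in Hiv. lra.
  - (* both edges enter v: i lies on the segment [j, v] *)
    pose proof (Hseg _ (on_seg_start _ _)) as Hon. rewrite <- Ej, Ei in Hon.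
    apply (overlapping_siblings st n Z zBS T HF Hfeas Hopt i j Zinj Hne Hi Hj Hij);
      [congruence | rewrite <- Ei; exact Hslack | exact Hon].
Qed.
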